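(* Fix a positive integer $M$ and a nudging parameter $\mu>0$. Then there exist solutions $\mathbf{u}(\mathbf{x},t)$ of the 2D incompressible Euler equations $$\mathbf{u}_t+\mathbf{u}\cdot\nabla\mathbf{u}=-\nabla p,\qquad\nabla\cdot\mathbf{u}=0$$ on $\mathbb{T}^2$ which cannot be recovered by the nudged system $$\mathbf{v}_t+\mathbf{v}\cdot\nabla\mathbf{v}=-\nabla q+\mu P_M(\mathbf{u}-\mathbf{v}),\qquad\nabla\cdot\mathbf{v}=0$$ with arbitrary initial condition $\mathbf{v}^{in}$; that is, for such $\mathbf{u}$ there is an initial condition $\mathbf{v}^{in}$ for which the corresponding solution $\mathbf{v}$ does not satisfy $\|\mathbf{u}(t)-\mathbf{v}(t)\|_H\to0$ as $t\to\infty$.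
   Context: $\mathbb{T}^2=[0,2\pi)^2$ with periodic boundary conditions. Let $\mathcal{V}$ be the set of $\mathbb{R}^2$-valued $2\pi$-periodic trigonometric polynomials $\varphi$ with $\nabla\cdot\varphi=0$ and $\int_{\mathbb{T}^2}\varphi=0$; $H$ is the closure of $\mathcal{V}$ in $L^2$, $V^s$ its closure in the $H^s$ seminorm; solutions of the Euler equations are taken with initial data in $V^3$ (for which the equations are globally well-posed). $P_M$ is the projection onto the Fourier modes $\mathbf{n}\in\mathbb{Z}^2\setminus\{(0,0)\}$ with $|\mathbf{n}|\le M$. *)

From Stdlib Require Import Reals ZArith.
From Coquelicot Require Import Coquelicot.
Open Scope R_scope.

Definition mode := (Z * Z)%type.
Definition cvec := (C * C)%type.
(* A (spatial) field on T^2 = [0,2pi)^2 given by its Fourier coefficients: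
   f(x) = sum_n fhat(n) e^{i n.x}. *)
Definition field := mode -> cvec.

Definition k1 (n : mode) : R := IZR (fst n).
Definition k2 (n : mode) : R := IZR (snd n).
Definition modsq (n : mode) : R := k1 n ^ 2 + k2 n ^ 2.
Definition mneg (n : mode) : mode := (- fst n, - snd n)%Z.
Definition msub (n m : mode) : mode := (fst n - fst m, snd n - snd m)%Z.

Definition cvsub (a b : cvec) : cvec := (Cminus (fst a) (fst b), Cminus (snd a) (snd b)).
Definition cvsq (a : cvec) : R := Cmod (fst a) ^ 2 + Cmod (snd a) ^ 2.
Definition fsub (f g : field) : field := fun n => cvsub (f n) (g n).

Definition boxsum {G : AbelianMonoid} (N : nat) (g : mode -> G) : G :=
  sum_n (fun a => sum_n (fun b =>
      g (Z.of_nat a - Z.of_nat N, Z.of_nat b - Z.of_nat N)%Z) (2 * N)) (2 * N).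

(* Squared homogeneous H^s seminorm (Fourier side, Parseval normalization:
   ||f||_{L^2}^2 = 4 pi^2 * hs_sq 0 f). *)
Definition hs_partial (s : nat) (f : field) (N : nat) : R :=
  boxsum (G := R_AbelianMonoid) N (fun n => modsq n ^ s * cvsq (f n)).
Definition hs_sq (s : nat) (f : field) : R := real (Lim_seq (hs_partial s f)).

Definition in_V (s : nat) (f : field) : Prop :=
  f (0%Z, 0%Z) = (RtoC 0, RtoC 0)
  /\ (forall n, f (mneg n) = (Cconj (fst (f n)), Cconj (snd (f n))))       (* real-valued *)
  /\ (forall n, Cplus (Cmult (RtoC (k1 n)) (fst (f n)))
                      (Cmult (RtoC (k2 n)) (snd (f n))) = RtoC 0)           (* div f = 0 *)
  /\ ex_finite_lim_seq (hs_partial s f).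

(* Fourier coefficient of (u . grad) w at mode n is
     sum_{j + l = n} (uhat(j) . (i l)) what(l);
   [conv_to u w n b] says that the square partial sums over j converge to b. *)
Definition conv_term (u w : field) (n j : mode) : cvec :=
  let l := msub n j in
  let c := Cmult Ci (Cplus (Cmult (RtoC (k1 l)) (fst (u j)))
                           (Cmult (RtoC (k2 l)) (snd (u j)))) in
  (Cmult c (fst (w l)), Cmult c (snd (w l))).
Definition conv_to (u w : field) (n : mode) (b : cvec) : Prop :=
  filterlim (fun N => boxsum (G := C_AbelianMonoid) N (fun j => fst (conv_term u w n j)))
            eventually (locally (fst b))
  /\ filterlim (fun N => boxsum (G := C_AbelianMonoid) N (fun j => snd (conv_term u w n j)))
            eventually (locally (snd b)).

Definition PM (M : nat) (f : field) : field := fun n =>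
  if ((fst n =? 0)%Z && (snd n =? 0)%Z)%bool then (RtoC 0, RtoC 0)
  else if Rle_dec (modsq n) (INR M ^ 2) then f n else (RtoC 0, RtoC 0).

Definition C0_V3 (u : R -> field) : Prop :=
  (forall t, 0 <= t -> in_V 3 (u t))
  /\ (forall t, 0 <= t -> forall eps, 0 < eps -> exists delta, 0 < delta /\
        forall s, 0 <= s -> Rabs (s - t) < delta -> hs_sq 3 (fsub (u s) (u t)) < eps).

(* Strong solution on [0,oo) of  w_t + w.grad w = -grad p + F,  div w = 0,
   written mode by mode in Fourier space, with a pressure p (Fourier
   coefficients ph) and a given forcing F (Fourier coefficients). *)
Definition forced_euler_sol (F : R -> field) (w : R -> field) : Prop :=
  C0_V3 w /\
  exists ph : R -> mode -> C,
    forall t, 0 < t -> forall n, exists b : cvec,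
      conv_to (w t) (w t) n b
      /\ is_derive (fun s => fst (w s n)) t
           (Cplus (Cminus (Copp (fst b)) (Cmult (Cmult Ci (RtoC (k1 n))) (ph t n)))
                  (fst (F t n)))
      /\ is_derive (fun s => snd (w s n)) t
           (Cplus (Cminus (Copp (snd b)) (Cmult (Cmult Ci (RtoC (k2 n))) (ph t n)))
                  (snd (F t n))).

Definition euler_sol (u : R -> field) : Prop :=
  forced_euler_sol (fun _ _ => (RtoC 0, RtoC 0)) u.

Definition nudged_sol (mu : R) (M : nat) (u v : R -> field) : Prop :=
  forced_euler_sol
    (fun t n => let d := PM M (fsub (u t) (v t)) n in
                (Cmult (RtoC mu) (fst d), Cmult (RtoC mu) (snd d))) v.

Definition H_conv (u v : R -> field) : Prop :=
  forall eps, 0 < eps -> exists T, forall t, T <= t -> hs_sq 0 (fsub (u t) (v t)) < eps.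

(* The reference flow is the steady shear flow u = (2 cos ((M+1) x_2), 0): its Fourier modes
   lie outside the ball of radius M, so P_M u = 0 and v = 0 solves the nudged system from
   v^in = 0, at distance ||u||_H >= 1 from u for all times.  It is the only such solution.  In
   the equation for |v(n)|^2 the pressure drops out by incompressibility and the nudging term
   -mu P_M v only dissipates, while Young's inequality bounds the transport term; so every
   partial energy E_N satisfies E_N' <= 4 B W, where B bounds the energy and W, controlled by
   the H^3 norm, bounds the l^1 norm of |n| v(n).  On a short time interval any bound B on the
   energy therefore improves to B/2, the energy vanishes there, and a continuity argument
   propagates this to all times. *)

From Stdlib Require Import Reals ZArith Lra Lia Bool Classical.
From Coquelicot Require Import Coquelicot.
Open Scope R_scope.

(** * Finite sums over boxes of modes *)

Notation boxsumR := (boxsum (G := R_AbelianMonoid)).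

Section RealSums.

Implicit Types (a b g : nat -> R).

Lemma sum_n_nonneg a n : (forall k, 0 <= a k) -> 0 <= sum_n a n.
Proof. intros Ha. rewrite sum_n_Reals. now apply cond_pos_sum. Qed.

Lemma sum_n_le a b n : (forall k, a k <= b k) -> sum_n a n <= sum_n b n.
Proof. apply sum_n_m_le. Qed.

Lemma sum_n_Sn_r a n : sum_n a (S n) = sum_n a n + a (S n).
Proof. now rewrite sum_Sn. Qed.

Lemma sum_n_plus_R a b n : sum_n (fun k => a k + b k) n = sum_n a n + sum_n b n.
Proof. exact (sum_n_plus a b n). Qed.

Lemma sum_n_scal_l_R (c : R) a n : sum_n (fun k => c * a k) n = c * sum_n a n.
Proof. exact (sum_n_mult_l c a n). Qed.

Lemma sum_n_Sn_l a n : sum_n a (S n) = a 0%nat + sum_n (fun k => a (S k)) n.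
Proof.
  unfold sum_n. rewrite sum_Sn_m by lia. now rewrite sum_n_m_S.
Qed.

Lemma sum_n_prefix_le g L k : (forall i, 0 <= g i) -> sum_n g L <= sum_n g (L + k).
Proof.
  intros Hg. induction k as [|k IH]; [rewrite Nat.add_0_r; lra|].
  rewrite Nat.add_succ_r, sum_n_Sn_r. specialize (Hg (S (L + k))). lra.
Qed.

Lemma sum_n_window_le g d L L' : (forall i, 0 <= g i) -> (d + L <= L')%nat ->
  sum_n (fun k => g (d + k)%nat) L <= sum_n g L'.
Proof.
  revert g L'. induction d as [|d IH]; intros g L' Hg HL.
  - replace L' with (L + (L' - L))%nat by lia. now apply sum_n_prefix_le.
  - destruct L' as [|L']; [lia|].
    rewrite sum_n_Sn_l.
    specialize (IH (fun k => g (S k)) L' (fun i => Hg (S i)) ltac:(lia)).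
    specialize (Hg 0%nat). cbn [Nat.add] in *. lra.
Qed.

Lemma sum_n_rev g L : sum_n (fun k => g (L - k)%nat) L = sum_n g L.
Proof.
  revert g. induction L as [|L IH]; intros g; [reflexivity|].
  rewrite sum_n_Sn_r, sum_n_Sn_l, Nat.sub_diag, <- (IH (fun k => g (S k))).
  rewrite Rplus_comm. f_equal.
  apply sum_n_ext_loc. intros k Hk. f_equal. lia.
Qed.

End RealSums.

Lemma sum_n_Z_window_le (h : Z -> R) (c : Z) (L K : nat) : (forall z, 0 <= h z) ->
  (- Z.of_nat K <= c)%Z -> (c + Z.of_nat L <= Z.of_nat K)%Z ->
  sum_n (fun k => h (c + Z.of_nat k)%Z) L <= sum_n (fun k => h (Z.of_nat k - Z.of_nat K)%Z) (2 * K).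
Proof.
  intros Hh Hlo Hhi.
  set (d := Z.to_nat (c + Z.of_nat K)).
  rewrite (sum_n_ext _ (fun k => h (Z.of_nat (d + k) - Z.of_nat K)%Z)) by (intros; f_equal; lia).
  apply (sum_n_window_le (fun k => h (Z.of_nat k - Z.of_nat K)%Z)); [intros; apply Hh | lia].
Qed.

Lemma sum_n_Z_rev (h : Z -> R) (c : Z) (L : nat) :
  sum_n (fun k => h (c - Z.of_nat k)%Z) L = sum_n (fun k => h (c - Z.of_nat L + Z.of_nat k)%Z) L.
Proof.
  rewrite <- sum_n_rev. apply sum_n_ext_loc. intros k Hk. f_equal. lia.
Qed.

Section BoxSums.

Implicit Types (f g : mode -> R).

Lemma boxsum_ext N f g : (forall n, f n = g n) -> boxsumR N f = boxsumR N g.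
Proof. intros H. unfold boxsum. apply sum_n_ext; intros; apply sum_n_ext; auto. Qed.

Lemma boxsum_le N f g : (forall n, f n <= g n) -> boxsumR N f <= boxsumR N g.
Proof. intros H. unfold boxsum. apply sum_n_le; intros; apply sum_n_le; auto. Qed.

Lemma boxsum_nonneg N f : (forall n, 0 <= f n) -> 0 <= boxsumR N f.
Proof. intros H. unfold boxsum. apply sum_n_nonneg; intros; apply sum_n_nonneg; auto. Qed.

Lemma boxsum_plus N f g : boxsumR N (fun n => f n + g n) = boxsumR N f + boxsumR N g.
Proof.
  unfold boxsum. rewrite <- sum_n_plus_R. apply sum_n_ext; intros; apply sum_n_plus_R.
Qed.

Lemma boxsum_scal_l N c f : boxsumR N (fun n => c * f n) = c * boxsumR N f.
Proof.
  unfold boxsum. rewrite <- sum_n_scal_l_R. apply sum_n_ext; intros; apply sum_n_scal_l_R.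
Qed.

Lemma boxsum_const0 N : boxsumR N (fun _ => 0) = 0.
Proof.
  unfold boxsum. rewrite (sum_n_ext _ (fun _ => 0)) by (intros; now rewrite sum_n_const, Rmult_0_r).
  now rewrite sum_n_const, Rmult_0_r.
Qed.

Lemma boxsum_window_le f c1 c2 L1 L2 K : (forall n, 0 <= f n) ->
  (- Z.of_nat K <= c1)%Z -> (c1 + Z.of_nat L1 <= Z.of_nat K)%Z ->
  (- Z.of_nat K <= c2)%Z -> (c2 + Z.of_nat L2 <= Z.of_nat K)%Z ->
  sum_n (fun a => sum_n (fun b => f (c1 + Z.of_nat a, c2 + Z.of_nat b)%Z) L2) L1 <= boxsumR K f.
Proof.
  intros Hf H1 H2 H3 H4. unfold boxsum.
  eapply Rle_trans.
  - apply sum_n_le. intros a.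
    exact (sum_n_Z_window_le (fun z => f (c1 + Z.of_nat a, z)%Z) c2 L2 K (fun z => Hf _) H3 H4).
  - apply (sum_n_Z_window_le (fun z => sum_n (fun b => f (z, Z.of_nat b - Z.of_nat K)%Z) (2 * K)));
      auto.
    intros z. apply sum_n_nonneg. auto.
Qed.

Lemma boxsum_window_rev_le f c1 c2 L1 L2 K : (forall n, 0 <= f n) ->
  (- Z.of_nat K <= c1 - Z.of_nat L1)%Z -> (c1 <= Z.of_nat K)%Z ->
  (- Z.of_nat K <= c2 - Z.of_nat L2)%Z -> (c2 <= Z.of_nat K)%Z ->
  sum_n (fun a => sum_n (fun b => f (c1 - Z.of_nat a, c2 - Z.of_nat b)%Z) L2) L1 <= boxsumR K f.
Proof.
  intros Hf H1 H2 H3 H4.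
  rewrite (sum_n_ext _ (fun a =>
             sum_n (fun b => f (c1 - Z.of_nat a, c2 - Z.of_nat L2 + Z.of_nat b)%Z) L2))
    by (intros a; apply (sum_n_Z_rev (fun z => f (c1 - Z.of_nat a, z)%Z))).
  rewrite (sum_n_Z_rev (fun z => sum_n (fun b => f (z, c2 - Z.of_nat L2 + Z.of_nat b)%Z) L2)).
  apply boxsum_window_le; auto; lia.
Qed.

Lemma boxsum_mono N K f : (forall n, 0 <= f n) -> (N <= K)%nat -> boxsumR N f <= boxsumR K f.
Proof.
  intros Hf HNK. unfold boxsum at 1.
  rewrite (sum_n_ext _ (fun a => sum_n (fun b =>
    f (- Z.of_nat N + Z.of_nat a, - Z.of_nat N + Z.of_nat b)%Z) (2 * N))).
  - apply boxsum_window_le; auto; lia.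
  - intros a. apply sum_n_ext. intros b. f_equal. f_equal; lia.
Qed.

Definition msize (n : mode) : nat := Z.to_nat (Z.max (Z.abs (fst n)) (Z.abs (snd n))).

Lemma le_boxsum_msize f n : (forall m, 0 <= f m) -> f n <= boxsumR (msize n) f.
Proof.
  intros Hf. destruct n as [n1 n2].
  eapply Rle_trans;
    [| apply (boxsum_window_le f n1 n2 0 0); auto; unfold msize; simpl; lia].
  rewrite !sum_O, !Z.add_0_r. apply Rle_refl.
Qed.

Lemma boxsum_msub_r_le f n J : (forall m, 0 <= f m) ->
  boxsumR J (fun j => f (msub n j)) <= boxsumR (msize n + J) f.
Proof.
  intros Hf. unfold boxsum at 1.
  rewrite (sum_n_ext _ (fun a => sum_n (fun b =>
    f (fst n + Z.of_nat J - Z.of_nat a, snd n + Z.of_nat J - Z.of_nat b)%Z) (2 * J))).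
  - apply boxsum_window_rev_le; auto; unfold msize; lia.
  - intros a. apply sum_n_ext. intros b. unfold msub. f_equal. f_equal; simpl; lia.
Qed.

Lemma boxsum_msub_l_le f j N : (forall m, 0 <= f m) ->
  boxsumR N (fun n => f (msub n j)) <= boxsumR (msize j + N) f.
Proof.
  intros Hf. unfold boxsum at 1.
  rewrite (sum_n_ext _ (fun a => sum_n (fun b =>
    f (- Z.of_nat N - fst j + Z.of_nat a, - Z.of_nat N - snd j + Z.of_nat b)%Z) (2 * N))).
  - apply boxsum_window_le; auto; unfold msize; lia.
  - intros a. apply sum_n_ext. intros b. unfold msub. f_equal. f_equal; simpl; lia.
Qed.

Lemma boxsum_switch N J (F : mode -> mode -> R) :
  boxsumR N (fun n => boxsumR J (F n)) = boxsumR J (fun j => boxsumR N (fun n => F n j)).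
Proof.
  unfold boxsum.
  set (X := fun a b c d => F (Z.of_nat a - Z.of_nat N, Z.of_nat b - Z.of_nat N)%Z
                             (Z.of_nat c - Z.of_nat J, Z.of_nat d - Z.of_nat J)%Z).
  change (sum_n (fun a => sum_n (fun b => sum_n (fun c => sum_n (X a b c) (2*J)) (2*J)) (2*N)) (2*N)
    = sum_n (fun c => sum_n (fun d => sum_n (fun a => sum_n (fun b => X a b c d) (2*N)) (2*N)) (2*J)) (2*J)).
  transitivity (sum_n (fun a => sum_n (fun c => sum_n (fun b => sum_n (X a b c) (2*J)) (2*N)) (2*J)) (2*N)).
  { apply sum_n_ext; intros a. apply sum_n_switch. }
  rewrite sum_n_switch. apply sum_n_ext; intros c.
  transitivity (sum_n (fun a => sum_n (fun d => sum_n (fun b => X a b c d) (2*N)) (2*J)) (2*N)).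
  { apply sum_n_ext; intros a. apply sum_n_switch. }
  apply sum_n_switch.
Qed.

Lemma is_lim_seq_boxsum (F : mode -> nat -> R) (l : mode -> R) N :
  (forall n, is_lim_seq (F n) (l n)) -> is_lim_seq (fun J => boxsumR N (fun n => F n J)) (boxsumR N l).
Proof.
  assert (Hsum : forall (G : nat -> nat -> R) (g : nat -> R) K, (forall k, is_lim_seq (G k) (g k)) ->
            is_lim_seq (fun J => sum_n (fun k => G k J) K) (sum_n g K)).
  { intros G g K HG. induction K as [|K IH].
    - apply (is_lim_seq_ext (G 0%nat)); [intros; now rewrite sum_O | now rewrite sum_O].
    - rewrite sum_n_Sn_r.
      apply (is_lim_seq_ext (fun J => sum_n (fun k => G k J) K + G (S K) J));
        [intros; now rewrite sum_n_Sn_r | now apply is_lim_seq_plus'].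
  }
  intros H. unfold boxsum. apply Hsum. intros a. apply Hsum. intros b. apply H.
Qed.

Lemma is_derive_boxsum (F : R -> mode -> R) (D : mode -> R) x N :
  (forall n, is_derive (fun y => F y n) x (D n)) ->
  is_derive (fun y => boxsumR N (F y)) x (boxsumR N D).
Proof.
  intros H. unfold boxsum.
  apply (is_derive_sum_n (fun a y => sum_n (fun b =>
      F y (Z.of_nat a - Z.of_nat N, Z.of_nat b - Z.of_nat N)%Z) (2 * N))).
  intros a _.
  apply (is_derive_sum_n (fun b y => F y (Z.of_nat a - Z.of_nat N, Z.of_nat b - Z.of_nat N)%Z)).
  intros b _. apply H.
Qed.

End BoxSums.

Notation cv0 := (RtoC 0, RtoC 0).

Lemma modsq_nonneg n : 0 <= modsq n.
Proof. unfold modsq. nra. Qed.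

Lemma modsq_ge_1 n : n <> (0%Z, 0%Z) -> 1 <= modsq n.
Proof.
  destruct n as [n1 n2]. intros Hn. unfold modsq, k1, k2; simpl.
  assert (H : (1 <= n1 * n1 + n2 * n2)%Z).
  { destruct (Z.eq_dec n1 0); destruct (Z.eq_dec n2 0); subst; [easy| nia..]. }
  apply IZR_le in H. rewrite plus_IZR, !mult_IZR in H. lra.
Qed.

Lemma cvsq_nonneg a : 0 <= cvsq a.
Proof. unfold cvsq. pose proof (Cmod_ge_0 (fst a)). pose proof (Cmod_ge_0 (snd a)). nra. Qed.

Lemma cvsq_cv0 : cvsq cv0 = 0.
Proof. unfold cvsq. simpl. rewrite Cmod_0. ring. Qed.

Lemma Cmod_sqr (z : C) : Cmod z ^ 2 = fst z ^ 2 + snd z ^ 2.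
Proof. unfold Cmod. rewrite pow2_sqrt; [reflexivity | nra]. Qed.

Lemma cvsq_coords (a : cvec) :
  cvsq a = fst (fst a) ^ 2 + snd (fst a) ^ 2 + (fst (snd a) ^ 2 + snd (snd a) ^ 2).
Proof. unfold cvsq. rewrite !Cmod_sqr. ring. Qed.

Lemma cvsq_eq0 a : cvsq a = 0 -> a = cv0.
Proof.
  rewrite cvsq_coords. destruct a as [[x1 y1] [x2 y2]]; simpl. intros H.
  assert (x1 = 0) as -> by nra. assert (y1 = 0) as -> by nra.
  assert (x2 = 0) as -> by nra. assert (y2 = 0) as -> by nra.
  reflexivity.
Qed.

Lemma cvsub_cv0_r a : cvsub a cv0 = a.
Proof. destruct a. unfold cvsub. f_equal; simpl; ring. Qed.

Lemma cvsq_cvsub_le a b : cvsq (cvsub a b) <= 2 * cvsq a + 2 * cvsq b.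
Proof.
  rewrite !cvsq_coords. destruct a as [[a1 a2] [a3 a4]]; destruct b as [[b1 b2] [b3 b4]].
  unfold cvsub, Cminus, Cplus, Copp; cbn [fst snd].
  pose proof (pow2_ge_0 (a1 + b1)). pose proof (pow2_ge_0 (a2 + b2)).
  pose proof (pow2_ge_0 (a3 + b3)). pose proof (pow2_ge_0 (a4 + b4)). nra.
Qed.

Lemma cvsq_le_cvsub a b : cvsq a <= 2 * cvsq (cvsub a b) + 2 * cvsq b.
Proof.
  rewrite !cvsq_coords. destruct a as [[a1 a2] [a3 a4]]; destruct b as [[b1 b2] [b3 b4]].
  unfold cvsub, Cminus, Cplus, Copp; cbn [fst snd].
  pose proof (pow2_ge_0 (a1 - 2 * b1)). pose proof (pow2_ge_0 (a2 - 2 * b2)).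
  pose proof (pow2_ge_0 (a3 - 2 * b3)). pose proof (pow2_ge_0 (a4 - 2 * b4)). nra.
Qed.

Section SobolevSums.

Implicit Types (f g : field).

Lemma hs_term_nonneg s f n : 0 <= modsq n ^ s * cvsq (f n).
Proof. apply Rmult_le_pos; [apply pow_le, modsq_nonneg | apply cvsq_nonneg]. Qed.

Lemma hs_partial_0 f N : hs_partial 0 f N = boxsumR N (fun n => cvsq (f n)).
Proof. apply boxsum_ext. intros n. simpl. ring. Qed.

Lemma hs_partial_eq0 s f N : (forall n, f n = cv0) -> hs_partial s f N = 0.
Proof.
  intros Hf. unfold hs_partial.
  rewrite (boxsum_ext N _ (fun _ => 0)) by (intros n; rewrite Hf, cvsq_cv0; ring).
  apply boxsum_const0.
Qed.

Lemma hs_partial_nonneg s f N : 0 <= hs_partial s f N.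
Proof. apply boxsum_nonneg. intros; apply hs_term_nonneg. Qed.

Lemma hs_partial_mono s f N K : (N <= K)%nat -> hs_partial s f N <= hs_partial s f K.
Proof. apply boxsum_mono. intros; apply hs_term_nonneg. Qed.

Lemma hs_partial_le_hs_sq s f N : ex_finite_lim_seq (hs_partial s f) -> hs_partial s f N <= hs_sq s f.
Proof.
  intros H. apply Lim_seq_correct' in H.
  apply (is_lim_seq_incr_compare _ _ H). intros; apply hs_partial_mono; lia.
Qed.

Lemma hs_sq_le_of_bound s f C : (forall N, hs_partial s f N <= C) ->
  ex_finite_lim_seq (hs_partial s f) /\ hs_sq s f <= C.
Proof.
  intros H.
  assert (Hex : ex_finite_lim_seq (hs_partial s f)).
  { apply (ex_finite_lim_seq_incr _ C); auto. intros; apply hs_partial_mono; lia. }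
  split; [exact Hex|].
  apply (is_lim_seq_le _ (fun _ => C) _ _ H (Lim_seq_correct' _ Hex) (is_lim_seq_const C)).
Qed.

Lemma cvsq_le_hs_partial_0 f n : cvsq (f n) <= hs_partial 0 f (msize n).
Proof.
  rewrite hs_partial_0. apply (le_boxsum_msize (fun n => cvsq (f n))). intros; apply cvsq_nonneg.
Qed.

Lemma hs_partial_0_le_3 f N : f (0%Z, 0%Z) = cv0 -> hs_partial 0 f N <= hs_partial 3 f N.
Proof.
  intros Hmean. apply boxsum_le. intros n.
  destruct (classic (n = (0%Z, 0%Z))) as [->|Hn].
  - rewrite Hmean, cvsq_cv0. lra.
  - pose proof (modsq_ge_1 n Hn). pose proof (cvsq_nonneg (f n)).
    assert (1 <= modsq n ^ 3) by (rewrite <- (pow1 3); apply pow_incr; lra).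
    simpl pow at 1. nra.
Qed.

Lemma hs_sq_fsub_zero_r s f g : (forall n, g n = cv0) -> hs_sq s (fsub f g) = hs_sq s f.
Proof.
  intros Hg. unfold hs_sq. f_equal. apply Lim_seq_ext. intros N. apply boxsum_ext. intros n.
  unfold fsub. now rewrite Hg, cvsub_cv0_r.
Qed.

Lemma hs_sq_fsub_diag s f : hs_sq s (fsub f f) = 0.
Proof.
  unfold hs_sq. rewrite (Lim_seq_ext _ (fun _ => 0)), Lim_seq_const; [reflexivity|].
  intros N. apply hs_partial_eq0. intros n. unfold fsub, cvsub. f_equal; ring.
Qed.

Lemma hs_partial_fsub_le s f g N :
  hs_partial s (fsub f g) N <= 2 * hs_partial s f N + 2 * hs_partial s g N.
Proof.
  unfold hs_partial. rewrite <- !boxsum_scal_l, <- boxsum_plus. apply boxsum_le. intros n.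
  pose proof (cvsq_cvsub_le (f n) (g n)). pose proof (pow_le _ s (modsq_nonneg n)).
  unfold fsub. nra.
Qed.

Lemma hs_partial_le_fsub s f g N :
  hs_partial s f N <= 2 * hs_partial s (fsub f g) N + 2 * hs_partial s g N.
Proof.
  unfold hs_partial. rewrite <- !boxsum_scal_l, <- boxsum_plus. apply boxsum_le. intros n.
  pose proof (cvsq_le_cvsub (f n) (g n)). pose proof (pow_le _ s (modsq_nonneg n)).
  unfold fsub. nra.
Qed.

Lemma ex_finite_lim_hs_partial_fsub s f g : ex_finite_lim_seq (hs_partial s f) ->
  ex_finite_lim_seq (hs_partial s g) -> ex_finite_lim_seq (hs_partial s (fsub f g)).
Proof.
  intros Hf Hg. apply (hs_sq_le_of_bound _ _ (2 * hs_sq s f + 2 * hs_sq s g)).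
  intros N. pose proof (hs_partial_fsub_le s f g N).
  pose proof (hs_partial_le_hs_sq s f N Hf). pose proof (hs_partial_le_hs_sq s g N Hg). lra.
Qed.

End SobolevSums.

(** * A summable weight on modes *)

Definition weight1 (z : Z) : R := / (1 + IZR z ^ 2).
Definition weight (n : mode) : R := weight1 (fst n) * weight1 (snd n).

(* [weight1] is summable over Z: it is dominated by the increments of the bounded function [sat]. *)
Definition sat (x : R) : R := x / (1 + Rabs x).

Lemma weight1_pos z : 0 < weight1 z.
Proof. unfold weight1. apply Rinv_0_lt_compat. nra. Qed.

Lemma weight_nonneg n : 0 <= weight n.
Proof. unfold weight. pose proof (weight1_pos (fst n)). pose proof (weight1_pos (snd n)). nra. Qed.

Lemma sat_bound x : -1 <= sat x <= 1.
Proof.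
  unfold sat. pose proof (Rle_abs x). pose proof (Rabs_maj2 x).
  assert (Hd : 0 < 1 + Rabs x) by lra.
  split; apply (Rmult_le_reg_r (1 + Rabs x)); auto; unfold Rdiv;
    rewrite Rmult_assoc, Rinv_l, Rmult_1_r by lra; lra.
Qed.

Lemma weight1_le_sat_incr z : weight1 z <= 4 * (sat (IZR z + 1) - sat (IZR z)).
Proof.
  unfold weight1, sat. set (x := IZR z).
  destruct (Z_le_gt_dec 0 z) as [Hz|Hz].
  - assert (Hx : 0 <= x) by now apply IZR_le.
    rewrite (Rabs_right x), (Rabs_right (x + 1)) by lra.
    replace (4 * ((x + 1) / (1 + (x + 1)) - x / (1 + x))) with (/ ((x + 1) * (x + 2) / 4))
      by (field; lra).
    apply Rinv_le_contravar; nra.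
  - assert (Hx : x <= -1) by (apply IZR_le; lia).
    rewrite (Rabs_left1 x), (Rabs_left1 (x + 1)) by lra.
    replace (4 * ((x + 1) / (1 + - (x + 1)) - x / (1 + - x))) with (/ (- x * (1 - x) / 4))
      by (field; lra).
    apply Rinv_le_contravar; nra.
Qed.

Lemma sum_n_weight1_le c L : sum_n (fun k => weight1 (c + Z.of_nat k)%Z) L <= 8.
Proof.
  enough (H : sum_n (fun k => weight1 (c + Z.of_nat k)%Z) L
              <= 4 * (sat (IZR c + INR L + 1) - sat (IZR c))).
  { pose proof (sat_bound (IZR c + INR L + 1)). pose proof (sat_bound (IZR c)). lra. }
  induction L as [|L IH].
  - rewrite sum_O, Z.add_0_r. simpl INR. rewrite Rplus_0_r. apply weight1_le_sat_incr.
  - rewrite sum_n_Sn_r. pose proof (weight1_le_sat_incr (c + Z.of_nat (S L))) as H.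
    rewrite plus_IZR, <- INR_IZR_INZ, S_INR in H. rewrite S_INR.
    replace (IZR c + (INR L + 1)) with (IZR c + INR L + 1) in * by ring. lra.
Qed.

Lemma boxsum_weight_le N : boxsumR N weight <= 64.
Proof.
  unfold boxsum, weight. cbn [fst snd].
  assert (Hline : sum_n (fun k => weight1 (Z.of_nat k - Z.of_nat N)%Z) (2 * N) <= 8).
  { rewrite (sum_n_ext _ (fun k => weight1 (- Z.of_nat N + Z.of_nat k)%Z))
      by (intros; f_equal; lia).
    apply sum_n_weight1_le. }
  eapply Rle_trans.
  - apply sum_n_le. intros a. rewrite sum_n_scal_l_R.
    apply (Rmult_le_compat_l _ _ _ (Rlt_le _ _ (weight1_pos _)) Hline).
  - rewrite (sum_n_ext _ (fun a => 8 * weight1 (Z.of_nat a - Z.of_nat N)%Z))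
      by (intros; apply Rmult_comm).
    rewrite sum_n_scal_l_R. lra.
Qed.

Lemma conv_to_cv0 (u w : field) n : (forall j, conv_term u w n j = cv0) -> conv_to u w n cv0.
Proof.
  intros H.
  assert (Hsum : forall N, boxsum (G := C_AbelianMonoid) N (fun _ => RtoC 0) = RtoC 0).
  { intros N. unfold boxsum, sum_n. rewrite (sum_n_m_ext _ (fun _ => zero)).
    - exact (sum_n_m_const_zero _ _).
    - intros. exact (sum_n_m_const_zero _ _). }
  split; apply (filterlim_ext (fun _ => RtoC 0)); try apply filterlim_const;
    intros N; rewrite <- (Hsum N); apply sum_n_ext; intros a; apply sum_n_ext; intros b;
    now rewrite H.
Qed.

Lemma is_derive_const_C (c l : C) x : l = RtoC 0 -> is_derive (fun _ : R => c) x l.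
Proof. intros ->. exact (is_derive_const (K := R_AbsRing) (V := C_R_NormedModule) c x). Qed.

Lemma C0_V3_const f : in_V 3 f -> C0_V3 (fun _ => f).
Proof.
  intros Hf. split; [auto|].
  intros t _ eps Heps. exists 1. split; [lra|]. intros. now rewrite hs_sq_fsub_diag.
Qed.

Lemma forced_euler_sol_const F f : in_V 3 f -> (forall n j, conv_term f f n j = cv0) ->
  (forall t n, 0 < t -> F t n = cv0) -> forced_euler_sol F (fun _ => f).
Proof.
  intros Hf Hconv HF. split; [now apply C0_V3_const|].
  exists (fun _ _ => RtoC 0). intros t Ht n. exists cv0.
  split; [now apply conv_to_cv0|].
  rewrite (HF t n Ht). split; apply is_derive_const_C; simpl; ring.
Qed.

Definition zero_field : field := fun _ => cv0.

(* The Fourier coefficients of the steady shear flow (2 cos (K x_2), 0). *)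
Definition shear_support (K : nat) (n : mode) : bool :=
  ((fst n =? 0)%Z && (Z.abs (snd n) =? Z.of_nat K)%Z)%bool.
Definition shear (K : nat) : field := fun n =>
  if shear_support K n then (RtoC 1, RtoC 0) else cv0.

Lemma shear_supportP K n :
  shear_support K n = true <-> fst n = 0%Z /\ Z.abs (snd n) = Z.of_nat K.
Proof. unfold shear_support. now rewrite andb_true_iff, !Z.eqb_eq. Qed.

Lemma modsq_shear_support K n : shear_support K n = true -> modsq n = INR K ^ 2.
Proof.
  intros [H1 H2]%shear_supportP. unfold modsq, k1, k2.
  rewrite H1, <- (pow2_abs (IZR (snd n))), Rabs_Zabs, H2.
  rewrite <- INR_IZR_INZ. simpl. ring.
Qed.

Lemma hs_term_shear_le K s n :
  modsq n ^ s * cvsq (shear K n) <= (INR K ^ 2) ^ s * (1 + INR K ^ 2) * weight n.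
Proof.
  pose proof (pow_le _ s (pow2_ge_0 (INR K))) as HK.
  unfold shear. destruct (shear_support K n) eqn:E.
  - rewrite (modsq_shear_support K n E). apply shear_supportP in E as [H1 H2].
    unfold weight, weight1. rewrite H1, <- (pow2_abs (IZR (snd n))), Rabs_Zabs, H2, <- INR_IZR_INZ.
    unfold cvsq. simpl. rewrite Cmod_0, Cmod_1. right. field. nra.
  - rewrite cvsq_cv0, Rmult_0_r. pose proof (weight_nonneg n).
    apply Rmult_le_pos; [|lra]. apply Rmult_le_pos; nra.
Qed.

Lemma in_V_shear K s : (0 < K)%nat -> in_V s (shear K).
Proof.
  intros HK. repeat split.
  - unfold shear. destruct (shear_support K (0, 0)%Z) eqn:E; [|reflexivity].
    apply shear_supportP in E. simpl in E. lia.
  - intros n. unfold shear, shear_support, mneg. cbn [fst snd].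
    rewrite Z.abs_opp. replace (- fst n =? 0)%Z with (fst n =? 0)%Z
      by (destruct (Z.eqb_spec (fst n) 0); destruct (Z.eqb_spec (- fst n) 0); lia).
    destruct (_ && _)%bool; f_equal; unfold Cconj, RtoC; simpl; f_equal; ring.
  - intros n. unfold shear. destruct (shear_support K n) eqn:E; simpl.
    + apply shear_supportP in E as [H1 _]. unfold k1. rewrite H1. ring.
    + ring.
  - apply (hs_sq_le_of_bound _ _ ((INR K ^ 2) ^ s * (1 + INR K ^ 2) * 64)). intros N.
    eapply Rle_trans; [apply boxsum_le; intros n; apply hs_term_shear_le|].
    rewrite boxsum_scal_l. apply Rmult_le_compat_l; [|apply boxsum_weight_le].
    pose proof (pow_le _ s (pow2_ge_0 (INR K))). pose proof (pow2_ge_0 (INR K)). nra.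
Qed.

Lemma hs_sq_0_shear_ge_1 K : (0 < K)%nat -> 1 <= hs_sq 0 (shear K).
Proof.
  intros HK. destruct (in_V_shear K 0 HK) as (_ & _ & _ & Hfin).
  set (n := (0, Z.of_nat K)%Z).
  eapply Rle_trans; [| apply (hs_partial_le_hs_sq 0 _ (msize n) Hfin)].
  rewrite hs_partial_0. eapply Rle_trans;
    [| apply (le_boxsum_msize (fun n => cvsq (shear K n))); intros; apply cvsq_nonneg].
  unfold shear. replace (shear_support K n) with true.
  - unfold cvsq. simpl. rewrite Cmod_0, Cmod_1. lra.
  - symmetry. apply shear_supportP. simpl. lia.
Qed.

Lemma snd_shear K n : snd (shear K n) = RtoC 0.
Proof. unfold shear. now destruct (shear_support K n). Qed.

Lemma conv_term_shear K n j : conv_term (shear K) (shear K) n j = cv0.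
Proof.
  unfold conv_term. set (l := msub n j). rewrite !snd_shear.
  destruct (shear_support K l) eqn:E.
  - apply shear_supportP in E as [H1 _]. unfold k1. rewrite H1. f_equal; ring.
  - assert (Hl : shear K l = cv0) by (unfold shear; now rewrite E).
    rewrite Hl. f_equal; simpl; ring.
Qed.

Lemma PM_shear M K n : (M < K)%nat -> PM M (shear K) n = cv0.
Proof.
  intros HMK. unfold PM, shear. destruct (_ && _)%bool; [reflexivity|].
  destruct (Rle_dec (modsq n) (INR M ^ 2)) as [Hle|]; [|reflexivity].
  destruct (shear_support K n) eqn:E; [|reflexivity].
  rewrite (modsq_shear_support K n E) in Hle. apply lt_INR in HMK. pose proof (pos_INR M). nra.
Qed.

Lemma in_V_zero_field s : in_V s zero_field.
Proof.
  repeat split.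
  - intros n. unfold zero_field, Cconj. simpl. f_equal; apply injective_projections; simpl; ring.
  - intros n. unfold zero_field. simpl. ring.
  - apply (hs_sq_le_of_bound _ _ 0). intros N. now rewrite hs_partial_eq0.
Qed.

Lemma euler_sol_shear K : (0 < K)%nat -> euler_sol (fun _ => shear K).
Proof.
  intros HK. apply forced_euler_sol_const; auto using in_V_shear, conv_term_shear.
Qed.

Lemma nudged_sol_zero_field mu M u : (forall t n, PM M (u t) n = cv0) ->
  nudged_sol mu M u (fun _ => zero_field).
Proof.
  intros Hlow. apply forced_euler_sol_const; auto using in_V_zero_field.
  - intros n j. unfold conv_term, zero_field. cbv zeta. f_equal; simpl; ring.
  - intros t n _.
    replace (PM M (fsub (u t) zero_field) n) with (PM M (u t) n)
      by (unfold PM, fsub, zero_field; now rewrite cvsub_cv0_r).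
    cbv zeta. rewrite Hlow. f_equal; simpl; ring.
Qed.

(** * Young's inequality for the transport term *)

Section Young.

Variables (a w : mode -> R) (A W : R).
Hypotheses (a_nonneg : forall n, 0 <= a n) (w_nonneg : forall n, 0 <= w n).
Hypotheses (a_l2 : forall K, boxsumR K (fun n => a n ^ 2) <= A) (w_l1 : forall K, boxsumR K w <= W).

Lemma young_boxsum_le N J :
  boxsumR N (fun n => a n * boxsumR J (fun j => a j * w (msub n j))) <= A * W.
Proof.
  assert (Hshift_r : forall n, boxsumR J (fun j => w (msub n j)) <= W).
  { intros n. eapply Rle_trans; [apply boxsum_msub_r_le; auto | apply w_l1]. }
  assert (Hshift_l : forall j, boxsumR N (fun n => w (msub n j)) <= W).
  { intros j. eapply Rle_trans; [apply boxsum_msub_l_le; auto | apply w_l1]. }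
  (* Split [a n * a j <= (a n ^ 2 + a j ^ 2) / 2]; the two halves are summed first in [j],
     respectively first in [n]. *)
  assert (Hsplit : forall n j, a n * (a j * w (msub n j))
                              <= / 2 * (a n ^ 2 * w (msub n j)) + / 2 * (a j ^ 2 * w (msub n j))).
  { intros n j. pose proof (w_nonneg (msub n j)). pose proof (pow2_ge_0 (a n - a j)). nra. }
  assert (Hweighted : forall K (v : mode -> R), (forall n, 0 <= v n <= W) ->
            boxsumR K (fun n => a n ^ 2 * v n) <= A * W).
  { intros K v Hv. eapply Rle_trans.
    - apply boxsum_le. intros n. apply Rmult_le_compat_l; [apply pow2_ge_0 | apply Hv].
    - rewrite (boxsum_ext _ _ (fun n => W * a n ^ 2)) by (intros; ring).
      rewrite boxsum_scal_l. pose proof (a_l2 K). pose proof (Hv (0%Z, 0%Z)). nra. }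
  eapply Rle_trans.
  { apply boxsum_le. intros n. rewrite <- boxsum_scal_l. apply boxsum_le. intros j. apply Hsplit. }
  rewrite (boxsum_ext _ _ (fun n => / 2 * (a n ^ 2 * boxsumR J (fun j => w (msub n j)))
                                  + boxsumR J (fun j => / 2 * (a j ^ 2 * w (msub n j))))).
  2:{ intros n. rewrite boxsum_plus. f_equal.
       rewrite <- (boxsum_scal_l _ (a n ^ 2)), <- boxsum_scal_l. apply boxsum_ext. intros; ring. }
  rewrite boxsum_plus, boxsum_scal_l, boxsum_switch.
  rewrite (boxsum_ext J _ (fun j => / 2 * (a j ^ 2 * boxsumR N (fun n => w (msub n j))))).
  2:{ intros j. rewrite <- (boxsum_scal_l _ (a j ^ 2)), <- boxsum_scal_l.
       apply boxsum_ext. intros; ring. }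
  rewrite (boxsum_scal_l J).
  pose proof (Hweighted N _ (fun n => conj (boxsum_nonneg _ _ (fun j => w_nonneg _)) (Hshift_r n))).
  pose proof (Hweighted J _ (fun j => conj (boxsum_nonneg _ _ (fun n => w_nonneg _)) (Hshift_l j))).
  lra.
Qed.

Definition conv_l1 (n : mode) : R :=
  real (Lim_seq (fun J => boxsumR J (fun j => a j * w (msub n j)))).

Lemma conv_l1_spec n :
  is_lim_seq (fun J => boxsumR J (fun j => a j * w (msub n j))) (conv_l1 n) /\
  forall J, boxsumR J (fun j => a j * w (msub n j)) <= conv_l1 n.
Proof.
  assert (Ha : forall j, a j <= 1 + A).
  { intros j. pose proof (le_boxsum_msize (fun j => a j ^ 2) j (fun j => pow2_ge_0 (a j))).
    pose proof (a_l2 (msize j)). pose proof (pow2_ge_0 (a j - 1)). nra. }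
  assert (Hmono : forall J, boxsumR J (fun j => a j * w (msub n j))
                            <= boxsumR (S J) (fun j => a j * w (msub n j))).
  { intros J. apply boxsum_mono; [intros; apply Rmult_le_pos; auto | lia]. }
  assert (Hex : ex_finite_lim_seq (fun J => boxsumR J (fun j => a j * w (msub n j)))).
  { apply (ex_finite_lim_seq_incr _ ((1 + A) * W)); auto. intros J.
    eapply Rle_trans; [apply boxsum_le; intros j; apply Rmult_le_compat_r; auto|].
    rewrite boxsum_scal_l. apply Rmult_le_compat_l.
    - pose proof (Ha (0%Z, 0%Z)). pose proof (a_nonneg (0%Z, 0%Z)). lra.
    - eapply Rle_trans; [apply boxsum_msub_r_le; auto | apply w_l1]. }
  pose proof (Lim_seq_correct' _ Hex) as HL. split; [exact HL|].
  intros J. now apply (is_lim_seq_incr_compare _ _ HL).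
Qed.

Lemma young_conv_l1_le N : boxsumR N (fun n => a n * conv_l1 n) <= A * W.
Proof.
  assert (HL : is_lim_seq (fun J => boxsumR N (fun n => a n * boxsumR J (fun j => a j * w (msub n j))))
                          (boxsumR N (fun n => a n * conv_l1 n))).
  { apply (is_lim_seq_boxsum (fun n J => a n * boxsumR J (fun j => a j * w (msub n j)))).
    intros n. apply (is_lim_seq_scal_l _ (a n) _ (proj1 (conv_l1_spec n))). }
  exact (is_lim_seq_le _ _ _ (Finite (A * W)) (young_boxsum_le N) HL (is_lim_seq_const _)).
Qed.

End Young.

Definition coef_l1 (f : field) (n : mode) : R := Cmod (fst (f n)) + Cmod (snd (f n)).
Definition grad_coef_l1 (f : field) (n : mode) : R := (Rabs (k1 n) + Rabs (k2 n)) * coef_l1 f n.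

Lemma coef_l1_nonneg f n : 0 <= coef_l1 f n.
Proof. unfold coef_l1. pose proof (Cmod_ge_0 (fst (f n))). pose proof (Cmod_ge_0 (snd (f n))). lra. Qed.

Lemma grad_coef_l1_nonneg f n : 0 <= grad_coef_l1 f n.
Proof.
  unfold grad_coef_l1. apply Rmult_le_pos; [|apply coef_l1_nonneg].
  pose proof (Rabs_pos (k1 n)). pose proof (Rabs_pos (k2 n)). lra.
Qed.

Lemma coef_l1_sqr_le f n : coef_l1 f n ^ 2 <= 2 * cvsq (f n).
Proof.
  unfold coef_l1, cvsq. pose proof (pow2_ge_0 (Cmod (fst (f n)) - Cmod (snd (f n)))). nra.
Qed.

Lemma boxsum_coef_l1_sqr_le f K : boxsumR K (fun n => coef_l1 f n ^ 2) <= 2 * hs_partial 0 f K.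
Proof.
  rewrite hs_partial_0, <- boxsum_scal_l. apply boxsum_le. intros n. apply coef_l1_sqr_le.
Qed.

Lemma modsq_le_abs_sum_sqr n : modsq n <= (Rabs (k1 n) + Rabs (k2 n)) ^ 2 <= 2 * modsq n.
Proof.
  unfold modsq. rewrite <- (pow2_abs (k1 n)), <- (pow2_abs (k2 n)).
  pose proof (Rabs_pos (k1 n)). pose proof (Rabs_pos (k2 n)).
  pose proof (pow2_ge_0 (Rabs (k1 n) - Rabs (k2 n))). split; nra.
Qed.

Lemma inv_modsq_sqr_le_weight n : n <> (0%Z, 0%Z) -> / modsq n ^ 2 <= 3 * weight n.
Proof.
  intros Hn. pose proof (modsq_ge_1 n Hn) as Hm.
  unfold weight, weight1, modsq, k1, k2 in *.
  set (p := IZR (fst n) ^ 2) in *. set (q := IZR (snd n) ^ 2) in *.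
  assert (0 <= p) by apply pow2_ge_0. assert (0 <= q) by apply pow2_ge_0.
  replace (3 * (/ (1 + p) * / (1 + q))) with (/ ((1 + p) * (1 + q) / 3)) by (field; lra).
  apply Rinv_le_contravar; nra.
Qed.

(* AM-GM on [r s = (r^3 s) (1 / r^2)], with [r] the l^1 length of the mode. *)
Lemma grad_coef_l1_le f n : grad_coef_l1 f n <= 8 * (modsq n ^ 3 * cvsq (f n)) + 2 * weight n.
Proof.
  pose proof (weight_nonneg n). pose proof (hs_term_nonneg 3 f n).
  destruct (classic (n = (0%Z, 0%Z))) as [->|Hn].
  { unfold grad_coef_l1, k1, k2. simpl. rewrite Rabs_R0, Rplus_0_r, Rmult_0_l. lra. }
  unfold grad_coef_l1.
  pose proof (modsq_le_abs_sum_sqr n) as [Hr1 Hr2].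
  pose proof (modsq_ge_1 n Hn). pose proof (inv_modsq_sqr_le_weight n Hn).
  pose proof (coef_l1_sqr_le f n). pose proof (coef_l1_nonneg f n). pose proof (cvsq_nonneg (f n)).
  pose proof (Rabs_pos (k1 n)). pose proof (Rabs_pos (k2 n)).
  set (r := Rabs (k1 n) + Rabs (k2 n)) in *. set (s := coef_l1 f n) in *.
  set (m := modsq n) in *. set (c := cvsq (f n)) in *.
  assert (Hr0 : 0 <= r) by (unfold r; lra).
  assert (Hr : 0 < r) by (destruct Hr0 as [|<-]; [assumption | simpl in Hr1; lra]).
  assert (Hsplit : r * s = (r ^ 3 * s) * / r ^ 2) by (field; lra).
  assert (Hamgm : (r ^ 3 * s) * / r ^ 2 <= ((r ^ 3 * s) ^ 2 + (/ r ^ 2) ^ 2) / 2)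
    by (pose proof (pow2_ge_0 (r ^ 3 * s - / r ^ 2)); nra).
  assert (Hhigh : (r ^ 3 * s) ^ 2 <= 16 * (m ^ 3 * c)).
  { replace ((r ^ 3 * s) ^ 2) with ((r ^ 2) ^ 3 * s ^ 2) by ring.
    replace (16 * (m ^ 3 * c)) with ((2 * m) ^ 3 * (2 * c)) by ring.
    apply Rmult_le_compat; [apply pow_le, pow2_ge_0 | apply pow2_ge_0 | apply pow_incr; lra | lra]. }
  assert (Hlow : (/ r ^ 2) ^ 2 <= / m ^ 2).
  { rewrite pow_inv. apply Rinv_le_contravar; [nra|].
    replace ((r ^ 2) ^ 2) with (r ^ 4) by ring. nra. }
  lra.
Qed.

Lemma boxsum_grad_coef_l1_le f K : boxsumR K (grad_coef_l1 f) <= 8 * hs_partial 3 f K + 128.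
Proof.
  eapply Rle_trans; [apply boxsum_le; intros; apply grad_coef_l1_le|].
  rewrite boxsum_plus, !boxsum_scal_l. pose proof (boxsum_weight_le K). unfold hs_partial. lra.
Qed.

Lemma Cmod_conv_term_le f n j :
  Cmod (fst (conv_term f f n j)) <= coef_l1 f j * grad_coef_l1 f (msub n j) /\
  Cmod (snd (conv_term f f n j)) <= coef_l1 f j * grad_coef_l1 f (msub n j).
Proof.
  unfold conv_term, grad_coef_l1. set (l := msub n j). cbn [fst snd].
  set (c := (Ci * (RtoC (k1 l) * fst (f j) + RtoC (k2 l) * snd (f j)))%C).
  pose proof (Rabs_pos (k1 l)). pose proof (Rabs_pos (k2 l)).
  pose proof (Cmod_ge_0 (fst (f j))). pose proof (Cmod_ge_0 (snd (f j))).
  pose proof (Cmod_ge_0 (fst (f l))). pose proof (Cmod_ge_0 (snd (f l))).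
  assert (Hc : Cmod c <= (Rabs (k1 l) + Rabs (k2 l)) * coef_l1 f j).
  { unfold c, coef_l1. rewrite Cmod_mult, Cmod_Ci, Rmult_1_l.
    eapply Rle_trans; [apply Cmod_triangle|]. rewrite !Cmod_mult, !Cmod_R. nra. }
  assert (Hl : Cmod (fst (f l)) <= coef_l1 f l /\ Cmod (snd (f l)) <= coef_l1 f l)
    by (unfold coef_l1; lra).
  pose proof (Cmod_ge_0 c).
  replace (coef_l1 f j * ((Rabs (k1 l) + Rabs (k2 l)) * coef_l1 f l))
    with ((Rabs (k1 l) + Rabs (k2 l)) * coef_l1 f j * coef_l1 f l) by ring.
  rewrite !Cmod_mult. split; apply Rmult_le_compat; tauto.
Qed.

Lemma Cmod_boxsum_le (g : mode -> C) J :
  Cmod (boxsum (G := C_AbelianMonoid) J g) <= boxsumR J (fun j => Cmod (g j)).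
Proof.
  assert (Hsum : forall (h : nat -> C) K,
            Cmod (sum_n (G := C_AbelianMonoid) h K) <= sum_n (fun k => Cmod (h k)) K).
  { intros h K. induction K as [|K IH].
    - rewrite !sum_O. lra.
    - rewrite sum_Sn, sum_n_Sn_r. eapply Rle_trans; [apply Cmod_triangle | simpl; lra]. }
  unfold boxsum at 1. eapply Rle_trans; [apply Hsum|]. apply sum_n_le. intros a. apply Hsum.
Qed.

Lemma is_lim_seq_Cmod (S : nat -> C) (l : C) : filterlim S eventually (locally l) ->
  is_lim_seq (fun J => Cmod (S J)) (Cmod l).
Proof.
  intros H. unfold is_lim_seq.
  apply (filterlim_ext (fun J => @norm R_AbsRing C_R_NormedModule (S J))).
  { intros J. symmetry. apply Cmod_norm. }
  rewrite Cmod_norm.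
  apply (filterlim_comp _ _ _ S (@norm R_AbsRing C_R_NormedModule) eventually (locally l)); auto.
  apply (filterlim_norm (K := R_AbsRing) (V := C_R_NormedModule)).
Qed.

Lemma Cmod_conv_to_le f n b B W : (forall K, hs_partial 0 f K <= B) ->
  (forall K, boxsumR K (grad_coef_l1 f) <= W) -> conv_to f f n b ->
  Cmod (fst b) <= conv_l1 (coef_l1 f) (grad_coef_l1 f) n /\
  Cmod (snd b) <= conv_l1 (coef_l1 f) (grad_coef_l1 f) n.
Proof.
  intros HB HW [Hfst Hsnd].
  assert (HA : forall K, boxsumR K (fun n => coef_l1 f n ^ 2) <= 2 * B).
  { intros K. pose proof (boxsum_coef_l1_sqr_le f K). pose proof (HB K). lra. }
  destruct (conv_l1_spec _ _ _ _ (coef_l1_nonneg f) (grad_coef_l1_nonneg f) HA HW n) as [HL _].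
  split; [refine (is_lim_seq_le _ _ _ _ _ (is_lim_seq_Cmod _ _ Hfst) HL)
         |refine (is_lim_seq_le _ _ _ _ _ (is_lim_seq_Cmod _ _ Hsnd) HL)];
    intros J; eapply Rle_trans; try apply Cmod_boxsum_le;
    apply boxsum_le; intros j; apply Cmod_conv_term_le.
Qed.

(** * Evolution of a single mode *)

Definition cdot (z w : C) : R := fst z * fst w + snd z * snd w.

Lemma is_derive_fst_C (z : R -> C) t l : is_derive z t l -> is_derive (fun s => fst (z s)) t (fst l).
Proof.
  intros H. eapply filterdiff_ext_lin.
  - apply (filterdiff_comp z (fun u : C => fst u) _ (fun u : C => fst u) H).
    apply filterdiff_linear, (is_linear_fst (U := R_NormedModule) (V := R_NormedModule)).
  - reflexivity.
Qed.

Lemma is_derive_snd_C (z : R -> C) t l : is_derive z t l -> is_derive (fun s => snd (z s)) t (snd l).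
Proof.
  intros H. eapply filterdiff_ext_lin.
  - apply (filterdiff_comp z (fun u : C => snd u) _ (fun u : C => snd u) H).
    apply filterdiff_linear, (is_linear_snd (U := R_NormedModule) (V := R_NormedModule)).
  - reflexivity.
Qed.

Lemma is_derive_Cmod_sqr (z : R -> C) t l :
  is_derive z t l -> is_derive (fun s => Cmod (z s) ^ 2) t (2 * cdot (z t) l).
Proof.
  intros H.
  apply (is_derive_ext (fun s => fst (z s) ^ 2 + snd (z s) ^ 2)); [intros; now rewrite Cmod_sqr|].
  pose proof (is_derive_pow _ 2 t _ (is_derive_fst_C z t l H)) as H1.
  pose proof (is_derive_pow _ 2 t _ (is_derive_snd_C z t l H)) as H2.
  replace (2 * cdot (z t) l)
    with (INR 2 * fst l * fst (z t) ^ pred 2 + INR 2 * snd l * snd (z t) ^ pred 2)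
    by (unfold cdot; simpl; ring).
  now apply (is_derive_plus (fun s => fst (z s) ^ 2) (fun s => snd (z s) ^ 2)).
Qed.

Lemma cdot_ge_neg_Cmod z w : - cdot z w <= Cmod z * Cmod w.
Proof.
  pose proof (Cmod_ge_0 z). pose proof (Cmod_ge_0 w).
  assert (Hsq : cdot z w ^ 2 <= (Cmod z * Cmod w) ^ 2).
  { rewrite Rpow_mult_distr, !Cmod_sqr. unfold cdot.
    pose proof (pow2_ge_0 (fst z * snd w - snd z * fst w)). nra. }
  apply Rsqr_incr_0_var; [unfold Rsqr; nra | nra].
Qed.

(* By incompressibility the pressure gradient is orthogonal to the mode. *)
Lemma cdot_pressure_eq0 (z1 z2 p : C) (c1 c2 : R) : (RtoC c1 * z1 + RtoC c2 * z2 = 0)%C ->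
  cdot z1 (Ci * RtoC c1 * p) + cdot z2 (Ci * RtoC c2 * p) = 0.
Proof.
  intros Hdiv.
  transitivity (cdot (RtoC c1 * z1 + RtoC c2 * z2)%C (Ci * p)).
  - unfold cdot. simpl. ring.
  - rewrite Hdiv. unfold cdot. simpl. ring.
Qed.

Lemma cvsq_derive_le (z : R -> cvec) xi (b : cvec) (ph : C) (c1 c2 mu : R) (d : cvec) U :
  is_derive (fun s => fst (z s)) xi
    (Cplus (Cminus (Copp (fst b)) (Cmult (Cmult Ci (RtoC c1)) ph)) (Cmult (RtoC mu) (fst d))) ->
  is_derive (fun s => snd (z s)) xi
    (Cplus (Cminus (Copp (snd b)) (Cmult (Cmult Ci (RtoC c2)) ph)) (Cmult (RtoC mu) (snd d))) ->
  Cplus (Cmult (RtoC c1) (fst (z xi))) (Cmult (RtoC c2) (snd (z xi))) = RtoC 0 ->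
  (d = cv0 \/ d = cvsub cv0 (z xi)) -> 0 <= mu ->
  Cmod (fst b) <= U -> Cmod (snd b) <= U ->
  exists D, is_derive (fun s => cvsq (z s)) xi D /\
            D <= 2 * (Cmod (fst (z xi)) + Cmod (snd (z xi))) * U.
Proof.
  intros H1 H2 Hdiv Hd Hmu Hb1 Hb2.
  set (D1 := Cplus (Cminus (Copp (fst b)) (Cmult (Cmult Ci (RtoC c1)) ph)) (Cmult (RtoC mu) (fst d))) in *.
  set (D2 := Cplus (Cminus (Copp (snd b)) (Cmult (Cmult Ci (RtoC c2)) ph)) (Cmult (RtoC mu) (snd d))) in *.
  set (z1 := fst (z xi)) in *. set (z2 := snd (z xi)) in *.
  exists (2 * cdot z1 D1 + 2 * cdot z2 D2). split.
  { apply (is_derive_plus (fun s => Cmod (fst (z s)) ^ 2) (fun s => Cmod (snd (z s)) ^ 2));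
      now apply is_derive_Cmod_sqr. }
  assert (Hsplit : cdot z1 D1 + cdot z2 D2
                   = - (cdot z1 (fst b) + cdot z2 (snd b))
                     - (cdot z1 (Ci * RtoC c1 * ph) + cdot z2 (Ci * RtoC c2 * ph))
                     + mu * (cdot z1 (fst d) + cdot z2 (snd d)))
    by (unfold D1, D2, cdot; simpl; ring).
  assert (Hnudge : mu * (cdot z1 (fst d) + cdot z2 (snd d)) <= 0).
  { destruct Hd as [-> | ->]; unfold cdot; simpl; [lra|].
    pose proof (pow2_ge_0 (fst z1)). pose proof (pow2_ge_0 (snd z1)).
    pose proof (pow2_ge_0 (fst z2)). pose proof (pow2_ge_0 (snd z2)).
    fold z1 z2. nra. }
  rewrite (cdot_pressure_eq0 z1 z2 ph c1 c2 Hdiv) in Hsplit.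
  pose proof (cdot_ge_neg_Cmod z1 (fst b)). pose proof (cdot_ge_neg_Cmod z2 (snd b)).
  pose proof (Rmult_le_compat_l _ _ _ (Cmod_ge_0 z1) Hb1).
  pose proof (Rmult_le_compat_l _ _ _ (Cmod_ge_0 z2) Hb2).
  lra.
Qed.

Definition right_continuous_at (f : R -> R) (s : R) : Prop :=
  forall eps, 0 < eps -> exists d, 0 < d /\ forall y, s <= y < s + d -> Rabs (f y - f s) < eps.

Lemma right_continuous_at_of_ex_derive (f : R -> R) (s : R) :
  ex_derive f s -> right_continuous_at f s.
Proof.
  intros Hd eps Heps.
  pose proof (proj2 (continuity_pt_filterlim f s) (ex_derive_continuous f s Hd)) as Hc.
  destruct (Hc eps Heps) as [d [Hd0 Hball]].
  exists d. split; [exact Hd0|]. intros y Hy.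
  destruct (Req_dec y s) as [->|Hys]; [rewrite Rminus_diag, Rabs_R0; lra|].
  apply Hball. split; [split; [constructor | auto]|].
  simpl. unfold R_dist. rewrite Rabs_right; lra.
Qed.

(* [MVT_gen] applied to [f (Rmax s x)], which is differentiable where [f] is and continuous at [s]. *)
Lemma le_of_derive_le (f : R -> R) (s t K : R) : s <= t ->
  (forall x, s < x <= t -> ex_derive f x) -> (forall x, s < x < t -> Derive f x <= K) ->
  right_continuous_at f s -> f t <= f s + K * (t - s).
Proof.
  intros Hst Hder HK Hright.
  destruct (Req_dec s t) as [<-|Hne]; [lra|].
  set (g := fun x => f (Rmax s x)).
  set (df := fun x => if Rlt_dec s x then if Rlt_dec x t then Derive f x else K else K).
  assert (Hgder : forall x, s < x <= t -> is_derive g x (Derive f x)).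
  { intros x Hx. apply (is_derive_ext_loc f); [|now apply Derive_correct, Hder].
    assert (Hxs : 0 < x - s) by lra.
    exists (mkposreal _ Hxs). intros y Hy. change (Rabs (y - x) < x - s) in Hy.
    unfold g. rewrite Rmax_right; [reflexivity|].
    apply Rabs_def2 in Hy. lra. }
  destruct (MVT_gen g s t df) as [c [Hc Hmvt]].
  - rewrite Rmin_left, Rmax_right by lra. intros x Hx. unfold df.
    destruct (Rlt_dec s x); [|lra]. destruct (Rlt_dec x t); [|lra]. apply Hgder; lra.
  - rewrite Rmin_left, Rmax_right by lra. intros x Hx. destruct (Req_dec x s) as [->|Hxs].
    + intros eps Heps. destruct (Hright eps Heps) as [d [Hd Hclose]].
      exists d. split; [lra|]. intros y [_ Hy]. simpl in *. unfold R_dist in *. unfold g.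
      rewrite (Rmax_left s s) by lra. unfold Rmax. destruct Rle_dec.
      * apply Hclose. apply Rabs_def2 in Hy. lra.
      * rewrite Rminus_diag, Rabs_R0. lra.
    + apply continuity_pt_filterlim.
      apply (ex_derive_continuous (K := R_AbsRing) (V := R_NormedModule) g x).
      exists (Derive f x). apply Hgder. lra.
  - rewrite Rmin_left, Rmax_right in Hc by lra.
    unfold g in Hmvt. rewrite Rmax_right, Rmax_left in Hmvt by lra.
    assert (Hdf : df c <= K).
    { unfold df. destruct (Rlt_dec s c); [|lra]. destruct (Rlt_dec c t); [|lra]. apply HK; lra. }
    nra.
Qed.

Lemma le_0_of_halving {X : Type} (D : X -> Prop) (e : X -> R) (H : R) : 0 <= H ->
  (forall x, D x -> e x <= H) ->
  (forall B, 0 <= B -> (forall x, D x -> e x <= B) -> forall x, D x -> e x <= B / 2) ->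
  forall x, D x -> e x <= 0.
Proof.
  intros HH Hinit Hhalf x Hx.
  assert (Hk : forall k y, D y -> e y <= H * (/ 2) ^ k).
  { induction k as [|k IH]; intros y Hy.
    - rewrite pow_O, Rmult_1_r. auto.
    - replace (H * (/ 2) ^ S k) with (H * (/ 2) ^ k / 2) by (simpl; field).
      apply Hhalf; auto. apply Rmult_le_pos; [lra | apply pow_le; lra]. }
  assert (Hgeom : Rabs (/ 2) < 1) by (rewrite Rabs_right; lra).
  pose proof (is_lim_seq_scal_l _ H _ (is_lim_seq_geom (/ 2) Hgeom)) as HL.
  pose proof (is_lim_seq_le (fun _ => e x) _ (e x) _ (fun k => Hk k x Hx) (is_lim_seq_const _) HL).
  simpl in *. lra.
Qed.

Lemma continuous_induction (Q : R -> Prop) :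
  (forall t, 0 <= t -> (forall x, 0 <= x < t -> Q x) ->
     exists h, 0 < h /\ forall x, t <= x < t + h -> Q x) ->
  forall t, 0 <= t -> Q t.
Proof.
  intros Hstep T HT. apply NNPP. intros HnQ.
  set (A := fun x => 0 <= x <= T /\ forall y, 0 <= y < x -> Q y).
  assert (HA0 : A 0) by (split; [lra | intros; lra]).
  assert (Hbd : bound A) by (exists T; intros x [Hx _]; lra).
  destruct (completeness A Hbd (ex_intro _ 0 HA0)) as [S [HSub HSlub]].
  assert (HS0 : 0 <= S) by now apply HSub.
  assert (HST : S <= T) by (apply HSlub; intros x [Hx _]; lra).
  assert (Hbelow : forall y, 0 <= y < S -> Q y).
  { intros y Hy. apply NNPP. intros HnQy.
    enough (S <= y) by lra. apply HSlub. intros x [Hx HQx].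
    destruct (Rle_dec x y) as [|Hxy]; [assumption|]. exfalso. apply HnQy, HQx. lra. }
  destruct (Hstep S HS0 Hbelow) as [h [Hh HQ]].
  assert (Hupto : forall y, 0 <= y < S + h -> Q y).
  { intros y Hy. destruct (Rlt_dec y S); [apply Hbelow | apply HQ]; lra. }
  destruct (Rle_dec (S + h / 2) T).
  - assert (A (S + h / 2)) as HA by (split; [lra | intros; apply Hupto; lra]).
    pose proof (HSub _ HA). lra.
  - apply HnQ, Hupto. lra.
Qed.

(** * Nudged solutions starting from zero *)

Lemma PM_fsub_low M f g n : (forall m, PM M f m = cv0) ->
  PM M (fsub f g) n = cv0 \/ PM M (fsub f g) n = cvsub cv0 (g n).
Proof.
  intros Hlow. specialize (Hlow n). unfold PM in *.
  destruct (_ && _)%bool; [now left|].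
  destruct Rle_dec; [right | now left]. unfold fsub. now rewrite Hlow.
Qed.

Lemma C0_V3_local_bound v t0 : C0_V3 v -> 0 <= t0 -> exists delta H, 0 < delta /\
  forall xi, 0 <= xi -> Rabs (xi - t0) < delta -> forall K, hs_partial 3 (v xi) K <= H.
Proof.
  intros [HV Hcont] Ht0.
  destruct (Hcont t0 Ht0 1 Rlt_0_1) as [delta [Hdelta Hclose]].
  exists delta, (2 + 2 * hs_sq 3 (v t0)). split; [exact Hdelta|].
  intros xi Hxi Hd K.
  pose proof (proj2 (proj2 (proj2 (HV t0 Ht0)))) as Hfin0.
  pose proof (proj2 (proj2 (proj2 (HV xi Hxi)))) as Hfin.
  pose proof (hs_partial_le_fsub 3 (v xi) (v t0) K).
  pose proof (hs_partial_le_hs_sq 3 _ K (ex_finite_lim_hs_partial_fsub 3 _ _ Hfin Hfin0)).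
  pose proof (hs_partial_le_hs_sq 3 _ K Hfin0). pose proof (Hclose xi Hxi Hd). lra.
Qed.

Lemma partial_energy_right_continuous_at_0 v N : C0_V3 v -> (forall n, v 0 n = cv0) ->
  right_continuous_at (fun y => hs_partial 0 (v y) N) 0.
Proof.
  intros [HV Hcont] Hv0 eps Heps.
  destruct (Hcont 0 (Rle_refl 0) eps Heps) as [d [Hd Hclose]].
  exists d. split; [exact Hd|]. intros y Hy.
  rewrite (hs_partial_eq0 0 (v 0) N Hv0), Rminus_0_r, Rabs_right by apply Rle_ge, hs_partial_nonneg.
  pose proof (Hclose y (proj1 Hy) ltac:(rewrite Rminus_0_r, Rabs_right; lra)) as Hlt.
  rewrite (hs_sq_fsub_zero_r 3 (v y) (v 0) Hv0) in Hlt.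
  destruct (HV y (proj1 Hy)) as (Hmean & _ & _ & Hfin).
  pose proof (hs_partial_0_le_3 (v y) N Hmean). pose proof (hs_partial_le_hs_sq 3 _ N Hfin). lra.
Qed.

Section NudgedEnergy.

Variables (mu : R) (M : nat) (u v : R -> field).
Hypotheses (mu_nonneg : 0 <= mu) (u_low : forall t n, PM M (u t) n = cv0)
           (v_sol : nudged_sol mu M u v).

Lemma partial_energy_derive_le xi B W N : 0 < xi ->
  (forall K, hs_partial 0 (v xi) K <= B) -> (forall K, boxsumR K (grad_coef_l1 (v xi)) <= W) ->
  ex_derive (fun y => hs_partial 0 (v y) N) xi /\
  Derive (fun y => hs_partial 0 (v y) N) xi <= 4 * B * W.
Proof.
  intros Hxi HB HW. destruct v_sol as [[HV _] [ph Hph]].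
  set (U := conv_l1 (coef_l1 (v xi)) (grad_coef_l1 (v xi))).
  assert (Hmode : forall n, is_derive (fun s => cvsq (v s n)) xi (Derive (fun s => cvsq (v s n)) xi) /\
                            Derive (fun s => cvsq (v s n)) xi <= 2 * (coef_l1 (v xi) n * U n)).
  { intros n. destruct (Hph xi Hxi n) as [b [Hconv [Hd1 Hd2]]].
    destruct (Cmod_conv_to_le _ n b B W HB HW Hconv) as [Hb1 Hb2].
    destruct (HV xi (Rlt_le _ _ Hxi)) as (_ & _ & Hdiv & _).
    destruct (cvsq_derive_le (fun s => v s n) xi b (ph xi n) (k1 n) (k2 n) mu _ (U n) Hd1 Hd2
                (Hdiv n) (PM_fsub_low M (u xi) (v xi) n (u_low xi)) mu_nonneg Hb1 Hb2)
      as [D [HD HDle]].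
    assert (E : Derive (fun s => cvsq (v s n)) xi = D) by (apply is_derive_unique; exact HD).
    rewrite E. unfold coef_l1. split; [exact HD | lra]. }
  assert (HE : is_derive (fun y => hs_partial 0 (v y) N) xi
                         (boxsumR N (fun n => Derive (fun s => cvsq (v s n)) xi))).
  { apply (is_derive_ext (fun y => boxsumR N (fun n => cvsq (v y n)))).
    - intros y. now rewrite hs_partial_0.
    - apply (is_derive_boxsum (fun y n => cvsq (v y n))). intros n. apply Hmode. }
  assert (E : Derive (fun y => hs_partial 0 (v y) N) xi
              = boxsumR N (fun n => Derive (fun s => cvsq (v s n)) xi))
    by (apply is_derive_unique; exact HE).
  split; [eexists; exact HE|]. rewrite E.
  eapply Rle_trans; [apply boxsum_le; intros n; apply Hmode|].
  rewrite boxsum_scal_l.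
  assert (HA : forall K, boxsumR K (fun n => coef_l1 (v xi) n ^ 2) <= 2 * B).
  { intros K. pose proof (boxsum_coef_l1_sqr_le (v xi) K). pose proof (HB K). lra. }
  pose proof (young_conv_l1_le _ _ _ _ (coef_l1_nonneg _) (grad_coef_l1_nonneg _) HA HW N).
  unfold U. lra.
Qed.

Lemma partial_energy_growth s t H B N : 0 <= s <= t ->
  right_continuous_at (fun y => hs_partial 0 (v y) N) s ->
  (forall xi, s < xi <= t -> forall K, hs_partial 3 (v xi) K <= H) ->
  (forall xi, s < xi <= t -> forall K, hs_partial 0 (v xi) K <= B) ->
  hs_partial 0 (v t) N <= hs_partial 0 (v s) N + 4 * B * (8 * H + 128) * (t - s).
Proof.
  intros Hst Hright HH HB.
  assert (Hder : forall xi, s < xi <= t ->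
            ex_derive (fun y => hs_partial 0 (v y) N) xi /\
            Derive (fun y => hs_partial 0 (v y) N) xi <= 4 * B * (8 * H + 128)).
  { intros xi Hxi. apply partial_energy_derive_le; [lra | apply HB, Hxi|].
    intros K. pose proof (boxsum_grad_coef_l1_le (v xi) K). pose proof (HH xi Hxi K). lra. }
  apply (le_of_derive_le (fun y => hs_partial 0 (v y) N));
    [lra | apply Hder | intros x Hx; apply Hder; lra | exact Hright].
Qed.

Lemma partial_energy_le_hs3 xi K : 0 <= xi -> hs_partial 0 (v xi) K <= hs_partial 3 (v xi) K.
Proof.
  intros Hxi. destruct v_sol as [[HV _] _].
  apply hs_partial_0_le_3, (proj1 (HV xi Hxi)).
Qed.

(* On an interval short compared to the H^3 size of [v], the growth bound of
   [partial_energy_growth] halves any bound on the energy. *)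
Lemma partial_energy_vanishes_on s T H : 0 <= s < T ->
  (forall xi, s < xi <= T -> forall K, hs_partial 3 (v xi) K <= H) ->
  4 * (8 * H + 128) * (T - s) <= 1 / 2 ->
  (forall N, hs_partial 0 (v s) N <= 0) ->
  (forall N, right_continuous_at (fun y => hs_partial 0 (v y) N) s) ->
  forall xi N, s < xi <= T -> hs_partial 0 (v xi) N <= 0.
Proof.
  intros Hs HH Hshort Hs0 Hright xi N Hxi.
  assert (HH0 : 0 <= H).
  { pose proof (hs_partial_nonneg 3 (v T) 0). pose proof (HH T ltac:(lra) 0%nat). lra. }
  refine (le_0_of_halving (fun p : R * nat => s < fst p <= T)
            (fun p => hs_partial 0 (v (fst p)) (snd p)) H HH0 _ _ (xi, N) Hxi).
  - intros [y K] Hy. cbn [fst snd] in *. pose proof (partial_energy_le_hs3 y K ltac:(lra)).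
    pose proof (HH y Hy K). lra.
  - intros B HB0 HB [y K] Hy. cbn [fst snd] in *.
    pose proof (partial_energy_growth s y H B K ltac:(lra) (Hright K)
                  (fun x Hx => HH x ltac:(lra)) (fun x Hx K' => HB (x, K') ltac:(cbn [fst]; lra))).
    pose proof (Hs0 K).
    assert (Hy' : 4 * (8 * H + 128) * (y - s) <= 1 / 2).
    { eapply Rle_trans; [|exact Hshort]. apply Rmult_le_compat_l; lra. }
    pose proof (Rmult_le_compat_l B _ _ HB0 Hy'). lra.
Qed.

Lemma partial_energy_right_continuous s H N : (forall n, v 0 n = cv0) -> 0 <= s ->
  (forall K, hs_partial 3 (v s) K <= H) -> right_continuous_at (fun y => hs_partial 0 (v y) N) s.
Proof.
  intros Hv0 Hs HH. destruct (Req_dec s 0) as [->|Hspos].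
  - exact (partial_energy_right_continuous_at_0 v N (proj1 v_sol) Hv0).
  - apply right_continuous_at_of_ex_derive.
    apply (partial_energy_derive_le s H (8 * H + 128) N); [lra | |].
    + intros K. pose proof (partial_energy_le_hs3 s K Hs). pose proof (HH K). lra.
    + intros K. pose proof (boxsum_grad_coef_l1_le (v s) K). pose proof (HH K). lra.
Qed.

Lemma partial_energy_vanishes_step t : (forall n, v 0 n = cv0) -> 0 <= t ->
  (forall x, 0 <= x < t -> forall N, hs_partial 0 (v x) N <= 0) ->
  exists h, 0 < h /\ forall x, t <= x < t + h -> forall N, hs_partial 0 (v x) N <= 0.
Proof.
  intros Hv0 Ht Hbelow.
  destruct (C0_V3_local_bound v t (proj1 v_sol) Ht) as (delta & H & Hdelta & Hloc).
  assert (HH0 : 0 <= H).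
  { pose proof (hs_partial_nonneg 3 (v t) 0).
    pose proof (Hloc t Ht ltac:(rewrite Rminus_diag, Rabs_R0; lra) 0%nat). lra. }
  set (W := 8 * H + 128).
  set (h := Rmin (delta / 2) (1 / (16 * W))).
  assert (Hh : 0 < h) by (apply Rmin_pos; [lra | apply Rdiv_lt_0_compat; unfold W; lra]).
  assert (Hh1 : h <= delta / 2) by apply Rmin_l.
  assert (Hh2 : 16 * W * h <= 1).
  { assert (HW : 0 < 16 * W) by (unfold W; lra).
    pose proof (Rmin_r (delta / 2) (1 / (16 * W))) as Hr. fold h in Hr.
    apply (Rmult_le_compat_l (16 * W)) in Hr; [|lra].
    replace (16 * W * (1 / (16 * W))) with 1 in Hr by (field; lra). exact Hr. }
  set (s := Rmax 0 (t - h)).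
  assert (Hs : 0 <= s /\ t - h <= s /\ s <= t)
    by (split; [apply Rmax_l | split; [apply Rmax_r | apply Rmax_lub; lra]]).
  assert (Hnear : forall xi, s <= xi <= t + h -> forall K, hs_partial 3 (v xi) K <= H).
  { intros xi Hxi. apply Hloc; [lra | apply Rabs_def1; lra]. }
  assert (Hs0 : forall N, hs_partial 0 (v s) N <= 0).
  { intros N. destruct (Rlt_dec s t) as [Hst|Hst]; [apply Hbelow; lra|].
    replace s with 0 by (unfold s, Rmax in *; destruct Rle_dec; lra).
    rewrite (hs_partial_eq0 0 (v 0) N Hv0). lra. }
  assert (Hright : forall N, right_continuous_at (fun y => hs_partial 0 (v y) N) s)
    by (intros N; apply (partial_energy_right_continuous s H N Hv0); [lra | apply Hnear; lra]).
  exists h. split; [exact Hh|]. intros x Hx N.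
  destruct (Req_dec x s) as [->|Hxs]; [apply Hs0|].
  apply (partial_energy_vanishes_on s (t + h) H); auto; try lra.
  - intros xi Hxi. apply Hnear. lra.
  - fold W. assert (t + h - s <= 2 * h) by lra.
    assert (4 * W * (t + h - s) <= 4 * W * (2 * h)) by (apply Rmult_le_compat_l; unfold W; lra).
    lra.
Qed.

Lemma nudged_sol_from_zero_vanishes : (forall n, v 0 n = cv0) -> forall t n, 0 <= t -> v t n = cv0.
Proof.
  intros Hv0.
  assert (HE : forall t, 0 <= t -> forall N, hs_partial 0 (v t) N <= 0).
  { apply (continuous_induction (fun t => forall N, hs_partial 0 (v t) N <= 0)).
    intros t Ht Hbelow. now apply partial_energy_vanishes_step. }
  intros t n Ht. apply cvsq_eq0.
  pose proof (cvsq_le_hs_partial_0 (v t) n). pose proof (HE t Ht (msize n)).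
  pose proof (cvsq_nonneg (v t n)). lra.
Qed.

End NudgedEnergy.

Theorem corollary4p5 (M : nat) (mu : R) :
  (0 < M)%nat -> 0 < mu ->
  exists u : R -> field, euler_sol u /\
    exists vin : field, in_V 3 vin /\
      (exists v, nudged_sol mu M u v /\ v 0 = vin) /\
      (forall v, nudged_sol mu M u v -> v 0 = vin -> ~ H_conv u v).
Proof.
  intros _ Hmu.
  assert (Hlow : forall (t : R) n, PM M (shear (S M)) n = cv0) by (intros; apply PM_shear; lia).
  exists (fun _ => shear (S M)). split; [apply euler_sol_shear; lia|].
  exists zero_field. split; [apply in_V_zero_field|]. split.
  { exists (fun _ => zero_field). split; [now apply nudged_sol_zero_field | reflexivity]. }
  intros v Hv Hv0 Hconv.
  destruct (Hconv 1 Rlt_0_1) as [T HT].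
  set (t := Rmax T 0).
  assert (Hvt : forall n, v t n = cv0).
  { intros n. apply (nudged_sol_from_zero_vanishes mu M _ v (Rlt_le _ _ Hmu) Hlow Hv);
      [now rewrite Hv0 | apply Rmax_r]. }
  pose proof (HT t (Rmax_l T 0)) as Hfar.
  rewrite (hs_sq_fsub_zero_r 0 _ _ Hvt) in Hfar.
  pose proof (hs_sq_0_shear_ge_1 (S M) ltac:(lia)). lra.
Qed.
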